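(* Let $n$ be an integer with $n\neq\pm1$ such that $3n$ is not a square. Then the polynomial $P_n(X)=X^3-3(n+1)X+2(n+1)\in\mathbb Q[X]$ has Galois group over $\mathbb Q$ isomorphic to $S_3$. *)

From HB Require Import structures.
From mathcomp Require Import all_boot all_order all_algebra all_fingroup all_solvable all_field.
Set Implicit Arguments. Unset Strict Implicit. Unset Printing Implicit Defensive.
Import GRing.Theory Num.Theory.
Local Open Scope ring_scope.

Definition Pn (n : int) : {poly rat} :=
  'X^3 - ((3 * (n + 1))%:~R) *: 'X + ((2 * (n + 1))%:~R)%:P.

From HB Require Import structures.
From mathcomp Require Import all_boot all_order all_algebra all_fingroup all_solvable all_field.
From mathcomp Require Import zify ring.
Import GRing.Theory Num.Theory.
Local Open Scope ring_scope.

(* The Galois group of the splitting field E of a polynomial with distinct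
   roots r acts faithfully on r, so it embeds in S_(size r).  For an
   irreducible cubic with roots a, b, c, [E : Q] is divisible by 3 (the degree
   of a) and by 2 (the degree of d = (a-b)(a-c)(b-c), whose square, the
   discriminant, is rational while d is not), so the embedding into S_3 is
   onto.  For P_n the rational root test shows irreducibility exactly when
   n is not -1, 0 or 1, and the discriminant is 108 n (n+1)^2, a rational
   square iff 3n is one. *)

Lemma Qint_dvd_numqX {x : rat} {k : nat} :
  (denq x %| numq x ^+ k.+1)%Z -> x \is a Num.int.
Proof.
move=> dvd_den; rewrite Qint_def -absz_denq -[1]/(Posz 1) eqz_nat.
have cop : coprime `|denq x| `|numq x ^+ k.+1|.
  by rewrite abszX coprimeXr // coprime_sym coprime_num_den.
by rewrite -(gcdn_idPl dvd_den).
Qed.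

Lemma Qint_depressed_cubic_root {s t : int} {x : rat} :
  x ^+ 3 + s%:~R * x + t%:~R = 0 -> x \is a Num.int.
Proof.
move=> x_root; apply: (@Qint_dvd_numqX x 2).
apply/dvdzP; exists (- (s * numq x * denq x + t * denq x ^+ 2)).
apply: (@intr_inj rat); rewrite -[x]divq_num_den in x_root.
have : (denq x)%:~R != 0 :> rat by rewrite intr_eq0 denq_neq0.
move: x_root; rewrite !(rmorphM, rmorphD, rmorphN, rmorphXn) /=.
set a : rat := (numq x)%:~R; set b : rat := (denq x)%:~R => x_root b_neq0.
transitivity (b ^+ 3 * ((a / b) ^+ 3 + s%:~R * (a / b) + t%:~R)
              - (s%:~R * a * b + t%:~R * b ^+ 2) * b); first by field.
by rewrite x_root; ring.
Qed.

Lemma Qint_sqr_int {k : int} {x : rat} : x ^+ 2 = k%:~R -> x \is a Num.int.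
Proof.
move=> x_sq; apply: (@Qint_dvd_numqX x 1).
apply/dvdzP; exists (k * denq x); apply: (@intr_inj rat).
rewrite -[x]divq_num_den in x_sq.
have : (denq x)%:~R != 0 :> rat by rewrite intr_eq0 denq_neq0.
move: x_sq; rewrite !(rmorphM, rmorphXn) /=.
set a : rat := (numq x)%:~R; set b : rat := (denq x)%:~R => x_sq b_neq0.
transitivity (b ^+ 2 * (a / b) ^+ 2); first by field.
by rewrite x_sq; ring.
Qed.

Lemma depressed_cubic_disc (R : comNzRingType) (s t a b c : R) :
  'X^3 + s *: 'X + t%:P = \prod_(z <- [:: a; b; c]) ('X - z%:P) ->
  ((a - b) * (a - c) * (b - c)) ^+ 2 = - 4 * s ^+ 3 - 27 * t ^+ 2.
Proof.
rewrite !big_cons big_nil mulr1.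
have -> : ('X - a%:P) * (('X - b%:P) * ('X - c%:P)) =
    'X^3 - (a + b + c) *: 'X^2 + (a * b + b * c + c * a) *: 'X - (a * b * c)%:P.
  by rewrite -!mul_polyC !(rmorphD, rmorphM) /=; ring.
move=> eq_poly; have coef_eq i := congr1 (fun q : {poly R} => q`_i) eq_poly.
move: (coef_eq 0%N) (coef_eq 1%N) (coef_eq 2%N); rewrite !coefE /=.
rewrite !(mulr0, mulr1, add0r, addr0, subr0, sub0r) => -> -> /esym/eqP.
rewrite oppr_eq0 => /eqP sum_roots.
have -> : c = (a + b + c) - a - b by ring.
by rewrite sum_roots; ring.
Qed.

Section GaloisRootPerm.

Context {F : fieldType} {L : splittingFieldType F}.
Context {K E : {subfield L}} {r : seq L}.
Hypothesis defE : <<K & r>>%VS = E.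

Local Notation G := 'Gal(E / K)%g.

Lemma sub_adjoin_field : (K <= E)%VS.
Proof. by rewrite -defE subv_adjoin_seq. Qed.

Lemma mem_adjoin_field z : z \in r -> z \in E.
Proof. by rewrite -defE; apply: seqv_sub_adjoin. Qed.

Lemma gal_eq_on_adjoin_seq (x y : gal_of E) :
  x \in G -> y \in G -> {in r, x =1 y} -> x = y.
Proof.
move=> Gx Gy xy; set k := (x * y^-1)%g.
have kz z : z \in E -> x z = y z -> k z = z.
  by move=> Ez xyz; rewrite galM // xyz -galM ?memv_gal // mulgV gal_id.
have kE : (E <= fixedField [set k])%VS.
  rewrite -{1}defE; apply/Fadjoin_seqP; split => [|z rz].
    apply/subvP=> z Kz; have Ez := subvP sub_adjoin_field z Kz.
    by apply/fixedFieldP=> // _ /set1P->; rewrite kz ?(fixed_gal sub_adjoin_field).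
  by apply/fixedFieldP=> [|_ /set1P->]; rewrite ?kz ?xy ?mem_adjoin_field.
apply/eqP/gal_eqP => a Ea.
have [_ /(_ k (set11 k))] := mem_fixedFieldP (subvP kE a Ea).
by rewrite galM // => /(congr1 y); rewrite -galM ?memv_gal // mulVg gal_id.
Qed.

Context {p : {poly L}}.
Hypotheses (Kp : p \is a polyOver K) (Dp : p %= \prod_(z <- r) ('X - z%:P)).
Hypothesis uniq_r : uniq r.

Lemma gal_mem_roots x z : x \in G -> z \in r -> x z \in r.
Proof.
move=> Gx rz; have homx : kHom K E x by rewrite -gal_kHom ?sub_adjoin_field.
have := kHom_root_id sub_adjoin_field homx Kp (mem_adjoin_field _ rz).
by rewrite !(eqp_root Dp) !root_prod_XsubC; apply.
Qed.

Local Notation n := (size r).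

(* Outside [G] the defaults [i] and [1] below are junk values. *)
Definition gal_root_ffun (x : gal_of E) : {ffun 'I_n -> 'I_n} :=
  [ffun i : 'I_n => insubd i (index (x r`_i) r)].

Definition gal_root_perm (x : gal_of E) : {perm 'I_n} :=
  insubd (1%g : {perm 'I_n}) (gal_root_ffun x).

Lemma gal_root_permE x i : x \in G -> r`_(gal_root_perm x i) = x r`_i.
Proof.
move=> Gx; have xr j : x r`_(j : 'I_n) \in r by apply: gal_mem_roots; rewrite ?mem_nth.
have rE j : r`_(gal_root_ffun x j) = x r`_j.
  by rewrite ffunE val_insubd index_mem xr nth_index.
suff inj : injectiveb (gal_root_ffun x).
  by rewrite /gal_root_perm -pvalE -[pval _]/(val _) insubdK ?rE.
apply/injectiveP=> j k eq_jk; apply/val_inj/eqP.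
rewrite -(nth_uniq 0 _ _ uniq_r) ?ltn_ord //.
have x_inj : injective x := can_inj (lker0_lfunK (AEnd_lker0 _)).
by apply/eqP/x_inj; rewrite -!rE eq_jk.
Qed.

Lemma gal_root_permM : {in G &, {morph gal_root_perm : x y / (x * y)%g}}.
Proof.
move=> x y Gx Gy; apply/permP=> i; apply/val_inj/eqP.
rewrite permM -(nth_uniq 0 _ _ uniq_r) ?ltn_ord //.
by rewrite !gal_root_permE ?groupM // galM // mem_adjoin_field ?mem_nth.
Qed.

Definition gal_root_morphism := Morphism gal_root_permM.

Lemma injm_gal_root_perm : ('injm gal_root_morphism)%g.
Proof.
apply/injmP=> x y Gx Gy /= eq_xy; apply: gal_eq_on_adjoin_seq => // _ /(nthP 0)[i ri <-].
by rewrite -!(gal_root_permE _ (Ordinal ri)) // eq_xy.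
Qed.

Lemma card_gal_le_fact : (#|G| <= n`!)%N.
Proof.
rewrite -(card_injm injm_gal_root_perm) // -card_Sn -cardsT.
exact/subset_leq_card/subsetT.
Qed.

Lemma gal_isog_Sn : #|G| = n`! -> (G \isog [set: 'S_n])%g.
Proof.
move=> cardG; have injG := injm_gal_root_perm.
apply/isogP; exists gal_root_morphism; first exact: injG.
by apply/eqP; rewrite eqEcard subsetT cardsT card_Sn card_injm //= cardG.
Qed.

End GaloisRootPerm.

Section AdjoinDegree.

Context {F : fieldType} {L : fieldExtType F}.

Lemma adjoin_degree_dvd_dim (E : {subfield L}) x :
  x \in E -> (adjoin_degree 1 x %| \dim E)%N.
Proof.
move=> Ex; have := field_dimS (_ : (<<1; x>> <= E)%VS).
by rewrite dim_Fadjoin dimv1 muln1; apply; rewrite sub_adjoin1v.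
Qed.

Lemma adjoin_degree_irr_root (p : {poly F}) x :
  irreducible_poly p -> root (map_poly (in_alg L) p) x ->
  adjoin_degree 1 x = (size p).-1.
Proof.
move=> irr_p px0; have [q Dq] := polyOver1P (minPolyOver 1 x).
have q_dvd_p : q %| p.
  by rewrite -(dvdp_map (in_alg L)) -Dq minPoly_dvdp ?alg_polyOver.
have size_q : size q = (adjoin_degree 1 x).+1.
  by rewrite -(size_map_poly (in_alg L)) -Dq size_minPoly.
have /eqp_size : q %= p by apply: irr_p.2; rewrite // size_q /adjoin_degree.
by rewrite size_q => <-.
Qed.

Lemma adjoin_degree_sqrt (K : {subfield L}) x :
  x ^+ 2 \in K -> x \notin K -> adjoin_degree K x = 2%N.
Proof.
move=> Kx2 xNK; set q := 'X^2 - (x ^+ 2)%:P.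
have q_neq0 : q != 0 by rewrite -size_poly_eq0 size_XnsubC.
have /(dvdp_leq q_neq0) : minPoly K x %| q.
  by rewrite minPoly_dvdp ?polyOverXnsubC // /root !hornerE subrr.
rewrite size_minPoly size_XnsubC // ltnS => deg_le2.
apply/eqP; rewrite eqn_leq deg_le2 ltn_neqAle eq_sym adjoin_deg_eq1 xNK.
by rewrite /adjoin_degree.
Qed.

End AdjoinDegree.

Lemma memv1_sqr {F : fieldType} {L : fieldExtType F} {d : L} {e : F} :
  d ^+ 2 = e%:A -> d \in 1%VS -> exists k : F, k ^+ 2 = e.
Proof.
move=> d2 /vlineP[k dk]; exists k; apply: (fmorph_inj (in_alg L)).
by rewrite rmorphXn /= -dk d2.
Qed.

Theorem galois_cubic_isog_S3 {F : fieldType} {L : splittingFieldType F}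
    {E : {subfield L}} {p : {poly F}} {a b c : L} :
  irreducible_poly p -> size p = 4%N ->
  map_poly (in_alg L) p %= \prod_(z <- [:: a; b; c]) ('X - z%:P) ->
  <<1 & [:: a; b; c]>>%VS = E ->
  ((a - b) * (a - c) * (b - c)) ^+ 2 \in 1%VS ->
  (a - b) * (a - c) * (b - c) \notin 1%VS ->
  ('Gal(E / 1) \isog [set: 'S_3])%g.
Proof.
set r := [:: a; b; c]; set d := _ * _ * _ => irr_p size_p Dp defE d2_1 dN1.
have uniq_r : uniq r.
  have : d != 0 by apply: contraNneq dN1 => ->; apply: mem0v.
  by rewrite /d !mulf_eq0 !negb_or !subr_eq0 /= !inE !negb_or => /andP[/andP[-> ->] ->].
have rE := mem_adjoin_field defE.
have galE : galois 1 E.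
  apply/splitting_galoisField; exists (map_poly (in_alg L) p).
  split; [exact: alg_polyOver | | by exists r].
  by rewrite (eqp_separable Dp) separable_prod_XsubC.
have cardG : #|'Gal(E / 1)%g| = \dim E by rewrite -galois_dim // dimv1 divn1.
have root_a : root (map_poly (in_alg L) p) a.
  by rewrite (eqp_root Dp) root_prod_XsubC mem_head.
have dvd3 : (3 %| \dim E)%N.
  have := adjoin_degree_irr_root p a irr_p root_a; rewrite size_p /= => <-.
  by rewrite adjoin_degree_dvd_dim ?rE ?mem_head.
have dvd2 : (2 %| \dim E)%N.
  rewrite -(adjoin_degree_sqrt _ _ d2_1 dN1) adjoin_degree_dvd_dim //.
  by rewrite /d !(rpredM, rpredB) ?rE // !inE eqxx ?orbT.
have le6 : (\dim E <= 6)%N.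
  by rewrite -cardG (card_gal_le_fact defE (alg_polyOver _ _) Dp uniq_r).
apply: (gal_isog_Sn defE (alg_polyOver _ _) Dp uniq_r).
rewrite cardG; apply/eqP; rewrite eqn_leq le6 /=.
by rewrite dvdn_leq ?adim_gt0 // (@Gauss_dvd 2 3) ?dvd2.
Qed.

Lemma Pn_int_root (n m : int) :
  m ^+ 3 - 3 * (n + 1) * m + 2 * (n + 1) = 0 -> n = -1 \/ n = 0 \/ n = 1.
Proof.
move=> m_root.
(* 27 m^3 - 8 = (3m - 2)(9m^2 + 6m + 4), so 3m - 2 divides 8. *)
have {m_root}dvd8 : (3 * m - 2) * (27 * (n + 1) - 9 * m ^+ 2 - 6 * m - 4) = 8.
  transitivity (8 - 27 * (m ^+ 3 - 3 * (n + 1) * m + 2 * (n + 1))); first by ring.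
  by rewrite m_root mulr0 subr0.
have : -2 <= m <= 3.
  have : 27 * (n + 1) - 9 * m ^+ 2 - 6 * m - 4 != 0.
    by apply/eqP => k0; move: dvd8; rewrite k0 mulr0.
  nia.
case/andP=> m_ge m_le.
have : m = -2 \/ m = -1 \/ m = 0 \/ m = 1 \/ m = 2 \/ m = 3 by lia.
by move=> [|[|[|[|[|]]]]] mE; rewrite mE in dvd8; lia.
Qed.

Lemma size_Pn_tail (n : int) :
  (size (- ((3 * (n + 1))%:~R *: 'X) + ((2 * (n + 1))%:~R)%:P : {poly rat})%R < 4)%N.
Proof.
apply: (leq_ltn_trans (size_polyD _ _)).
rewrite size_polyN gtn_max (leq_ltn_trans (size_scale_leq _ _)) ?size_polyX //.
exact: leq_ltn_trans (size_polyC_leq1 _) _.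
Qed.

Lemma size_Pn (n : int) : size (Pn n) = 4%N.
Proof. by rewrite /Pn -addrA size_polyDl ?size_polyXn ?size_Pn_tail. Qed.

Lemma Pn_monic (n : int) : Pn n \is monic.
Proof.
by rewrite /Pn -addrA monicE lead_coefDl ?lead_coefXn ?size_polyXn ?size_Pn_tail.
Qed.

Lemma Pn_rat_root (n : int) (x : rat) : root (Pn n) x -> n = -1 \/ n = 0 \/ n = 1.
Proof.
rewrite /root /Pn !hornerE => /eqP x_root.
have /numqK xE : x \is a Num.int.
  apply: (@Qint_depressed_cubic_root (- (3 * (n + 1))) (2 * (n + 1))).
  by rewrite -x_root rmorphN mulNr.
apply: (@Pn_int_root n (numq x)); apply: (@intr_inj rat).
by rewrite rmorph0 -x_root -[in RHS]xE; ring.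
Qed.

Lemma Pn_irreducible (n : int) :
  n != -1 -> n != 0 -> n != 1 -> irreducible_poly (Pn n).
Proof.
move=> n_neqN1 n_neq0 n_neq1; apply: cubic_irreducible; first by rewrite size_Pn.
move=> x; apply/negP => /Pn_rat_root.
by case=> [|[|]] /eqP; apply/negP.
Qed.

Lemma map_Pn (L : fieldExtType rat) (n : int) :
  map_poly (in_alg L) (Pn n) =
    'X^3 + (- (3 * (n + 1))%:~R) *: 'X + ((2 * (n + 1))%:~R)%:P.
Proof.
rewrite /Pn rmorphD rmorphB /= map_polyXn map_polyZ map_polyX map_polyC /=.
by rewrite scaleNr !scaler_int.
Qed.

Lemma Pn_roots_disc {L : fieldExtType rat} {n : int} {a b c : L} :
  map_poly (in_alg L) (Pn n) = \prod_(z <- [:: a; b; c]) ('X - z%:P) ->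
  ((a - b) * (a - c) * (b - c)) ^+ 2 = (108 * n * (n + 1) ^+ 2)%:~R.
Proof. by rewrite map_Pn => /depressed_cubic_disc ->; ring. Qed.

Lemma Pn_disc_nonsquare (n : int) :
  ~ (exists m : int, 3 * n = m ^+ 2) -> n + 1 != 0 ->
  forall k : rat, k ^+ 2 != (108 * n * (n + 1) ^+ 2)%:~R.
Proof.
move=> nsq n1_neq0 k; apply/eqP => k2; apply: nsq.
(* 108 n (n+1)^2 = 3n (6 (n+1))^2 *)
set x := k / (6 * (n + 1))%:~R.
have x2 : x ^+ 2 = (3 * n)%:~R.
  rewrite /x expr_div_n k2 !rmorphM /=; field.
  by rewrite -[1]/(1%:~R : rat) -rmorphD intr_eq0.
exists (numq x); apply: (@intr_inj rat).
by rewrite rmorphXn /= (numqK (Qint_sqr_int x2)) x2.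
Qed.

Theorem lemma5p1 (n : int) (L : splittingFieldType rat) (E : {subfield L}) :
  n != 1 -> n != -1 -> ~ (exists m : int, 3 * n = m ^+ 2) ->
  splittingFieldFor 1%VS (map_poly (in_alg L) (Pn n)) E ->
  ('Gal(E / 1%VS) \isog [set: 'S_3])%g.
Proof.
move=> n_neq1 n_neqN1 nsq [rs Drs defE].
have n_neq0 : n != 0 by apply: contra_not_neq nsq => ->; exists 0.
have n1_neq0 : n + 1 != 0 by rewrite -[1]opprK subr_eq0.
have size_rs : size rs = 3%N.
  by have := eqp_size Drs; rewrite size_prod_XsubC size_map_poly size_Pn => -[].
case: rs Drs defE size_rs => [|a [|b [|c [|]]]] // Drs defE _.
have Dp : map_poly (in_alg L) (Pn n) = \prod_(z <- [:: a; b; c]) ('X - z%:P).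
  by apply/eqP; rewrite -eqp_monic ?map_monic ?Pn_monic ?monic_prod_XsubC.
have d2 : ((a - b) * (a - c) * (b - c)) ^+ 2 = ((108 * n * (n + 1) ^+ 2)%:~R : rat)%:A.
  by rewrite (Pn_roots_disc Dp) -(rmorph_int (in_alg L)).
have irr_Pn := Pn_irreducible n n_neqN1 n_neq0 n_neq1.
apply: (galois_cubic_isog_S3 irr_Pn (size_Pn n) Drs defE).
  by rewrite d2 rpredZ ?mem1v.
apply/negP => /(memv1_sqr d2)[k]; apply/eqP.
exact: Pn_disc_nonsquare.
Qed.
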